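(* Let $V$ be a complex vector space with basis $\{v_i:i\in\mathbb{Z}\}$ and let $\mathbf{a}\in\mathbb{C}^{\mathbb{Z}}$ be not generic. Then $\mathbf{a}^\perp$ is a subspace of $V$ of finite codimension $m$, where $m$ is the minimal non-negative integer for which there exists a non-zero $v\in\mathbf{a}^\perp$ with $\omega(v)=m$. Moreover, for such a $v$ (with $\omega(v)=m$), the collection of all $\mathbb{Z}$-translates of $v$ is a basis of $\mathbf{a}^\perp$, and this basis extended by $v_0,v_1,\dots,v_{m-1}$ (an empty list if $m=0$) is a basis of $V$.
   Context: $\mathbb{C}^{\mathbb{Z}}$ is identified with the dual $V^*$: $\mathbf{a}=(a_i)$ corresponds to the functional $v_i\mapsto a_i$; write $\langle\mathbf{a},v\rangle$ for the evaluation. $\mathbb{Z}$ acts on $V$ by $n\cdot v_i=v_{i+n}$ and on $\mathbb{C}^{\mathbb{Z}}$ by $n\cdot(a_i)_i=(a_{i+n})_i$; write $x^{(n)}=n\cdot x$ ($\mathbb{Z}$-translates). An element $\mathbf{a}$ is generic if the multiset of all its $\mathbb{Z}$-translates is linearly independent. $\mathbf{a}^\perp=\{v\in V:\langle\mathbf{a},v^{(i)}\rangle=0\text{ for all }i\in\mathbb{Z}\}$. For non-zero $v=\sum_i c_iv_i\in V$, $l(v)=\min\{i:c_i\neq0\}$, $r(v)=\max\{i:c_i\neq0\}$ and $\omega(v)=r(v)-l(v)$. *)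

From HB Require Import structures.
From mathcomp Require Import all_boot all_order all_algebra.
From mathcomp Require Import boolp classical_sets fsbigop reals.
From mathcomp Require Import complex.
Set Implicit Arguments. Unset Strict Implicit. Unset Printing Implicit Defensive.
Import Order.TTheory GRing.Theory Num.Theory.
Local Open Scope ring_scope.

Section Defs.
Variable R : realType.
Local Notation C := R[i].

(* elements of C^Z / coefficient functions of vectors of V *)
Definition cseq := int -> C.

(* V : v = sum_i c_i v_i, represented by its coefficient function, which has
   finite support *)
Definition inV (v : cseq) : Prop :=
  exists N : nat, forall i : int, (N < `|i|)%N -> v i = 0.

(* translation on V : n . v_i = v_(i+n), hence coefficient at j is c_(j-n) *)
Definition shiftV (n : int) (v : cseq) : cseq := fun j => v (j - n).
Definition shiftA (n : int) (a : cseq) : cseq := fun i => a (i + n).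

(* the evaluation <a, v> = sum_i a_i c_i (finite sum since v is in V) *)
Definition pairing (a v : cseq) : C := (\sum_(i \in [set: int]) (a i * v i))%R.

Definition basisV (i : int) : cseq := fun j => if j == i then 1 else 0.

Definition lincomb (I : Type) (f : I -> cseq) (s : seq I) (c : I -> C) : cseq :=
  fun j => \sum_(k <- s) c k * f k j.

(* linear independence of a family (as a multiset: repetitions make it dependent) *)
Definition lin_indep (I : eqType) (f : I -> cseq) : Prop :=
  forall (s : seq I) (c : I -> C), uniq s ->
    lincomb f s c = (fun _ => 0) -> forall k, k \in s -> c k = 0.

Definition in_span (I : Type) (f : I -> cseq) (w : cseq) : Prop :=
  exists (s : seq I) (c : I -> C), w = lincomb f s c.

Definition is_basis (I : eqType) (f : I -> cseq) (S : cseq -> Prop) : Prop :=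
  [/\ forall k, S (f k), lin_indep f & forall w, S w -> in_span f w].

Definition generic (a : cseq) : Prop := lin_indep (fun n : int => shiftA n a).

Definition perp (a : cseq) (v : cseq) : Prop :=
  inV v /\ forall i : int, pairing a (shiftV i v) = 0.

Definition is_subspace (S : cseq -> Prop) : Prop :=
  [/\ forall v, S v -> inV v, S (fun _ => 0),
      forall v w, S v -> S w -> S (fun j => v j + w j)
    & forall (c : C) v, S v -> S (fun j => c * v j)].

(* S has codimension m in V: dim (V / S) = m, i.e. there are m vectors whose
   classes modulo S form a basis of V / S *)
Definition codim (S : cseq -> Prop) (m : nat) : Prop :=
  exists u : 'I_m -> cseq,
    [/\ forall k, inV (u k),
        forall c : 'I_m -> C, S (lincomb u (enum 'I_m) c) -> forall k, c k = 0
      & forall v, inV v -> exists (c : 'I_m -> C) (w : cseq),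
          S w /\ v = (fun j => w j + lincomb u (enum 'I_m) c j)].

(* for non-zero v: omega(v) = r(v) - l(v) = m, where l(v) (resp. r(v)) is the
   least (resp. largest) index with non-zero coefficient *)
Definition omega_eq (v : cseq) (m : nat) : Prop :=
  exists l : int, [/\ v l != 0, v (l + m%:Z) != 0 &
    forall i : int, (i < l) || (l + m%:Z < i) -> v i = 0].

Definition nonzero (v : cseq) : Prop := exists i, v i != 0.

End Defs.

From HB Require Import structures.
From mathcomp Require Import all_boot all_order all_algebra.
From mathcomp Require Import boolp classical_sets fsbigop reals.
From mathcomp Require Import complex.
From mathcomp Require Import zify.
Import Order.TTheory GRing.Theory Num.Theory.
Local Open Scope ring_scope.

Set Implicit Arguments. Unset Strict Implicit. Unset Printing Implicit Defensive.

(* A non-trivial linear relation among the translates of a is a non-zero vector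
   of a^perp.  Take one, p, of minimal width m, with extreme coefficients p_l and
   p_(l+m).  Since both are non-zero, subtracting multiples of translates of p
   kills the coefficients of any vector of V above m - 1 and below 0, one index at
   a time: every vector is a combination of translates of p plus a remainder
   supported on [0, m).  A remainder lying in a^perp vanishes, as it would
   otherwise be a non-zero vector of a^perp of width < m.  Hence the translates
   of p span a^perp, they are independent by looking at the top coefficient, and
   v_0, ..., v_(m-1) complete them to a basis of V. *)

Lemma seq_extrema d (T : orderType d) (s : seq T) (x0 : T) : x0 \in s ->
  exists lo hi, [/\ lo \in s, hi \in s & forall y, y \in s -> (lo <= y <= hi)%O].
Proof.
move=> x0s; exists (\big[Order.min/x0]_(y <- s) y), (\big[Order.max/x0]_(y <- s) y).
split.
- by rewrite big_seq; elim/big_ind: _ => // x y ? ?; rewrite /Order.min; case: ifP.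
- by rewrite big_seq; elim/big_ind: _ => // x y ? ?; rewrite /Order.max; case: ifP.
- by move=> y ys; rewrite ge_bigmin_seq ?le_bigmax_seq.
Qed.

Section FiniteVectors.
Variable R : realType.
Local Notation C := R[i].

Definition window (N : nat) : seq int := [seq i%:Z - N%:Z | i <- iota 0 (N.*2).+1].

Lemma mem_window N i : (i \in window N) = (`|i| <= N)%N.
Proof.
apply/mapP/idP => [[k] | iN]; first by rewrite mem_iota => /andP[_ ?] ->; lia.
by exists (absz (i + N%:Z)); rewrite ?mem_iota; lia.
Qed.

Lemma window_uniq N : uniq (window N).
Proof. by rewrite map_inj_uniq ?iota_uniq // => i j /addIr []. Qed.

Definition bounded (N : nat) (v : int -> C) := forall i, (N < `|i|)%N -> v i = 0.

Lemma bounded_widen N N' v : (N <= N')%N -> bounded N v -> bounded N' v.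
Proof. by move=> le_NN' vN i ?; apply: vN; lia. Qed.

Lemma fsum_window (f : int -> C) N : bounded N f ->
  \sum_(i \in [set: int]) f i = \sum_(i <- window N) f i.
Proof.
move=> fN; rewrite (fsbigE (window N)) ?window_uniq //.
  by apply: eq_bigl => i; rewrite in_setT.
by move=> i _; rewrite mem_window -ltnNge; apply: fN.
Qed.

Lemma fsum_basisV (f : int -> C) n : \sum_(i \in [set: int]) basisV R n i * f i = f n.
Proof.
rewrite (fsbigE [:: n]) // => [|i _].
  by rewrite big_mkcond big_seq1 in_setT /basisV eqxx mul1r.
by rewrite mem_seq1 /basisV => /negbTE ->; rewrite mul0r.
Qed.

Lemma fsumD (f g : int -> C) : inV f -> inV g ->
  \sum_(i \in [set: int]) (f i + g i) =
  \sum_(i \in [set: int]) f i + \sum_(i \in [set: int]) g i.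
Proof.
move=> [N1 f0] [N2 g0]; pose N := maxn N1 N2.
have fN : bounded N f by apply: bounded_widen f0; lia.
have gN : bounded N g by apply: bounded_widen g0; lia.
have fgN : bounded N (fun i => f i + g i) by move=> i ?; rewrite fN ?gN ?addr0.
by rewrite !(fsum_window fN, fsum_window gN, fsum_window fgN) big_split.
Qed.

Lemma inV0 : inV (fun _ : int => 0 : C).
Proof. by exists 0%N. Qed.

Lemma inVD (v w : int -> C) : inV v -> inV w -> inV (fun j => v j + w j).
Proof.
by move=> [N1 v0] [N2 w0]; exists (maxn N1 N2) => i ?; rewrite v0 ?w0 ?addr0 //; lia.
Qed.

Lemma inV_mull (b v : int -> C) : inV v -> inV (fun j => b j * v j).
Proof. by move=> [N v0]; exists N => i ?; rewrite v0 ?mulr0. Qed.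

Lemma inV_mulr (v b : int -> C) : inV v -> inV (fun j => v j * b j).
Proof. by move=> [N v0]; exists N => i ?; rewrite v0 ?mul0r. Qed.

Lemma inV_shiftV n (v : int -> C) : inV v -> inV (shiftV n v).
Proof. by move=> [N v0]; exists (N + `|n|)%N => i ?; rewrite /shiftV v0 //; lia. Qed.

Lemma inV_subspace : is_subspace (@inV R).
Proof. by split=> // [|v w|k v]; [exact: inV0 | exact: inVD | exact: inV_mull]. Qed.

Definition vanishes_outside (lo hi : int) (v : int -> C) :=
  forall j, (j < lo) || (hi <= j) -> v j = 0.

Lemma vanishes_outside_inV lo hi v : vanishes_outside lo hi v -> inV v.
Proof. by move=> v0; exists (maxn `|lo| `|hi|) => j ?; apply: v0; lia. Qed.

Lemma vanishes_outside_subspace lo hi : is_subspace (vanishes_outside lo hi).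
Proof.
split=> [v|_ _ //|v w v0 w0 j ?|k v v0 j ?]; first exact: vanishes_outside_inV.
  by rewrite v0 ?w0 ?addr0.
by rewrite v0 ?mulr0.
Qed.

Lemma inV_basisV n : inV (basisV R n).
Proof.
by apply: (@vanishes_outside_inV n (n + 1)) => j ?; rewrite /basisV ifN //; lia.
Qed.

Lemma omega_exists (v : int -> C) : inV v -> nonzero v -> exists k, omega_eq v k.
Proof.
move=> [N v0] [i0 vi0]; pose S := [seq i <- window N | v i != 0].
have memS i : v i != 0 -> i \in S.
  move=> vi; rewrite mem_filter vi mem_window leqNgt; apply: contra vi => ?.
  by rewrite v0.
have [lo [hi [loS hiS ext]]] := seq_extrema (memS _ vi0).
move: loS hiS; rewrite !mem_filter => /andP[vlo _] /andP[vhi _].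
have /andP[lo_hi _] := ext _ (memS _ vhi).
exists `|hi - lo|%N, lo; split=> //; first by have -> : lo + `|hi - lo|%N%:Z = hi by lia.
move=> i out_i; apply/eqP; apply: contraT => /memS /ext; lia.
Qed.

Lemma omega_eq_vanishes_outside lo hi (v : int -> C) k :
  vanishes_outside lo hi v -> omega_eq v k -> lo + k%:Z < hi.
Proof.
move=> v0 [l [vl vlk _]].
have lo_l : lo <= l by apply: contraNT vl => ?; rewrite v0 ?eqxx //; lia.
by apply: contraNT vlk => ?; rewrite v0 ?eqxx //; lia.
Qed.

Lemma lincomb_nil (I : Type) (f : I -> int -> C) c : lincomb f [::] c = (fun _ => 0).
Proof. by apply: funext => j; rewrite /lincomb big_nil. Qed.

Lemma lincomb_cons (I : Type) (f : I -> int -> C) x s c :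
  lincomb f (x :: s) c = (fun j => c x * f x j + lincomb f s c j).
Proof. by apply: funext => j; rewrite /lincomb big_cons. Qed.

Lemma lincomb_cat (I : Type) (f : I -> int -> C) s t c :
  lincomb f (s ++ t) c = (fun j => lincomb f s c j + lincomb f t c j).
Proof. by apply: funext => j; rewrite /lincomb big_cat. Qed.

Lemma lincomb_map (I J : Type) (h : I -> J) (f : J -> int -> C) s c :
  lincomb f (map h s) c = lincomb (f \o h) s (c \o h).
Proof. by apply: funext => j; rewrite /lincomb big_map. Qed.

Lemma lincomb_eq0 (I : eqType) (f : I -> int -> C) s c :
  (forall k, k \in s -> c k = 0) -> lincomb f s c = (fun _ => 0).
Proof.
move=> c0; apply: funext => j; rewrite /lincomb big1_seq // => k /andP[_ /c0 ->].
by rewrite mul0r.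
Qed.

Lemma subspace_lincomb (I : Type) (S : (int -> C) -> Prop) (f : I -> int -> C) :
  is_subspace S -> (forall k, S (f k)) -> forall s c, S (lincomb f s c).
Proof.
case=> _ S0 SD SZ Sf s c; elim: s => [|x s IH]; first by rewrite lincomb_nil.
by rewrite lincomb_cons; apply: SD => //; apply: SZ.
Qed.

Lemma subspace_sub (S : (int -> C) -> Prop) v w :
  is_subspace S -> S v -> S w -> S (fun j => v j - w j).
Proof.
case=> _ _ SD SZ Sv Sw; have := SD _ _ Sv (SZ (-1) _ Sw).
by under eq_fun do rewrite mulN1r.
Qed.

Lemma lincomb_basisV (I : eqType) (f : I -> int) s c k : injective f -> uniq s ->
  k \in s -> lincomb (fun x => basisV R (f x)) s c (f k) = c k.
Proof.
move=> f_inj s_uniq ks; rewrite /lincomb (bigD1_seq k) //= big1_seq => [|x /andP[xk _]].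
  by rewrite /basisV eqxx mulr1 addr0.
by rewrite /basisV (inj_eq f_inj) eq_sym (negbTE xk) mulr0.
Qed.

Definition basisV_ord (m : nat) (k : 'I_m) : int -> C := basisV R k%:Z.

Lemma basisV_ord_vanishes_outside m (k : 'I_m) : vanishes_outside 0 m (basisV_ord k).
Proof.
by move=> j ?; rewrite /basisV_ord /basisV; case: eqP => // jk; have := ltn_ord k; lia.
Qed.

Lemma lincomb_basisV_ord_vanishes_outside (m : nat) s d :
  vanishes_outside 0 m (lincomb (@basisV_ord m) s d).
Proof.
exact: (subspace_lincomb (vanishes_outside_subspace _ _) (@basisV_ord_vanishes_outside m)).
Qed.

Lemma lincomb_basisV_ord_at (m : nat) s d (k : 'I_m) : uniq s -> k \in s ->
  lincomb (@basisV_ord m) s d k%:Z = d k.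
Proof.
by move=> s_uniq ks; apply: (lincomb_basisV (f := fun k : 'I_m => k%:Z)) => // x y [/val_inj].
Qed.

Lemma vanishes_outside_lincomb_basisV_ord (m : nat) r : vanishes_outside 0 m r ->
  r = lincomb (@basisV_ord m) (enum 'I_m) (fun k => r k%:Z).
Proof.
move=> r0; apply: funext => j; have [out_j|in_j] := boolP ((j < 0) || (m%:Z <= j)).
  by rewrite r0 // lincomb_basisV_ord_vanishes_outside.
have jm : (`|j| < m)%N by lia.
have -> : j = (Ordinal jm)%:Z by rewrite /=; lia.
by rewrite lincomb_basisV_ord_at ?enum_uniq ?mem_enum.
Qed.

Definition sum_family (I J : Type) (f : I -> int -> C) (g : J -> int -> C) (x : I + J) :=
  match x with inl i => f i | inr j => g j end.

Definition lefts (I J : Type) (s : seq (I + J)) : seq I :=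
  pmap (fun x => if x is inl i then Some i else None) s.

Definition rights (I J : Type) (s : seq (I + J)) : seq J :=
  pmap (fun x => if x is inr j then Some j else None) s.

Lemma mem_lefts (I J : eqType) (s : seq (I + J)) i : (i \in lefts s) = (inl i \in s).
Proof.
rewrite mem_pmap; apply/mapP/idP => [[[i'|j'] xs //= [->]] | xs] //.
by exists (inl i).
Qed.

Lemma mem_rights (I J : eqType) (s : seq (I + J)) j : (j \in rights s) = (inr j \in s).
Proof.
rewrite mem_pmap; apply/mapP/idP => [[[i'|j'] xs //= [->]] | xs] //.
by exists (inr j).
Qed.

Lemma lefts_uniq (I J : eqType) (s : seq (I + J)) : uniq s -> uniq (lefts s).
Proof. by apply: (pmap_uniq (g := inl)) => -[]. Qed.

Lemma rights_uniq (I J : eqType) (s : seq (I + J)) : uniq s -> uniq (rights s).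
Proof. by apply: (pmap_uniq (g := inr)) => -[]. Qed.

Lemma lincomb_sum_family (I J : Type) (f : I -> int -> C) (g : J -> int -> C) s c :
  lincomb (sum_family f g) s c =
  (fun j => lincomb f (lefts s) (c \o inl) j + lincomb g (rights s) (c \o inr) j).
Proof.
apply: funext => j; elim: s => [|[i|k] s IH]; first by rewrite /lincomb !big_nil addr0.
  by rewrite !lincomb_cons IH addrA.
by rewrite !lincomb_cons IH addrCA.
Qed.

Lemma sum_family_basis (I J : eqType) (S : (int -> C) -> Prop) (f : I -> int -> C)
    (g : J -> int -> C) :
  is_subspace S -> is_basis f S -> (forall j, inV (g j)) ->
  (forall s c, uniq s -> S (lincomb g s c) -> forall j, j \in s -> c j = 0) ->
  (forall w, inV w -> exists2 w', S w' & in_span g (fun j => w j - w' j)) ->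
  is_basis (sum_family f g) (@inV R).
Proof.
move=> S_sub [Sf f_indep f_span] gV g_indep decomp; have [S_inV S0 _ _] := S_sub.
split=> [[i|j] | s c s_uniq dep | w wV].
- exact: S_inV (Sf i).
- exact: gV.
- pose L := lincomb f (lefts s) (c \o inl); pose G := lincomb g (rights s) (c \o inr).
  have LG j : L j + G j = 0 by rewrite -[RHS]/((fun _ => 0) j) -dep lincomb_sum_family.
  have GS : S G.
    have -> : G = (fun j => 0 - L j) by apply: funext => j; rewrite -(LG j) addrC addKr.
    exact: subspace_sub S_sub S0 (subspace_lincomb S_sub Sf _ _).
  have cG0 := g_indep _ _ (rights_uniq s_uniq) GS.
  have L0 : L = (fun _ => 0) by apply: funext => j; rewrite -(LG j) /G lincomb_eq0 ?addr0.
  have cL0 := f_indep _ _ (lefts_uniq s_uniq) L0.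
  by case=> [i|j] xs; [apply: cL0; rewrite mem_lefts | apply: cG0; rewrite mem_rights].
- have [w' /[dup] w'S /f_span[s1 [c1 w'E]] [s2 [c2 rE]]] := decomp w wV.
  exists (map inl s1 ++ map inr s2), (fun x => match x with inl i => c1 i | inr j => c2 j end).
  rewrite lincomb_cat !lincomb_map -[lincomb _ s1 _]w'E -[lincomb _ s2 _]rE.
  by apply: funext => j; rewrite addrC subrK.
Qed.

End FiniteVectors.

Section Annihilator.
Variable R : realType.
Local Notation C := R[i].

Lemma shiftV_comp i n (v : int -> C) : shiftV i (shiftV n v) = shiftV (i + n) v.
Proof. by apply: funext => j; rewrite /shiftV opprD addrA. Qed.

Lemma pairing_shiftV (a v : int -> C) n : pairing a (shiftV n v) = pairing (shiftA n a) v.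
Proof.
rewrite /pairing (reindex_fsbigT (fun i => i + n)); last first.
  by exists (fun i => i - n) => i; rewrite ?addrK ?subrK.
by apply: eq_fsbigr => i _; rewrite /shiftV /shiftA addrK.
Qed.

Lemma pairing0 (a : int -> C) : pairing a (fun _ => 0) = 0.
Proof. by rewrite /pairing fsbig1 // => j _; rewrite mulr0. Qed.

Lemma pairingD (a v w : int -> C) : inV v -> inV w ->
  pairing a (fun j => v j + w j) = pairing a v + pairing a w.
Proof.
move=> vV wV; rewrite /pairing -(fsumD (inV_mull a vV) (inV_mull a wV)).
by apply: eq_fsbigr => j _; rewrite mulrDr.
Qed.

Lemma pairingZ (a v : int -> C) k : pairing a (fun j => k * v j) = k * pairing a v.
Proof. by rewrite /pairing mulr_fsumr; apply: eq_fsbigr => j _; rewrite mulrCA. Qed.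

Lemma pairing_basisV (b : int -> C) n : pairing b (basisV R n) = b n.
Proof.
by rewrite /pairing -[RHS]fsum_basisV; apply: eq_fsbigr => i _; rewrite mulrC.
Qed.

Lemma pairing_lincomb (I : Type) (b : int -> C) (f : I -> int -> C) s c :
  (forall k, inV (f k)) -> pairing b (lincomb f s c) = \sum_(k <- s) c k * pairing b (f k).
Proof.
move=> fV; elim: s => [|x s IH]; first by rewrite lincomb_nil pairing0 big_nil.
rewrite lincomb_cons pairingD ?pairingZ ?IH ?big_cons //; first exact: inV_mull.
exact: (subspace_lincomb (inV_subspace _) fV).
Qed.

Lemma perp_subspace (a : int -> C) : is_subspace (perp a).
Proof.
split=> [v []//|| v w [vV v0] [wV w0]|k v [vV v0]].
- by split=> [|i]; [exact: inV0 | exact: pairing0].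
- split=> [|i]; first exact: inVD.
  by rewrite (pairingD _ (inV_shiftV i vV) (inV_shiftV i wV)) v0 w0 addr0.
- by split=> [|i]; [exact: inV_mull | rewrite (pairingZ a (shiftV i v)) v0 mulr0].
Qed.

Lemma perp_shiftV (a v : int -> C) n : perp a v -> perp a (shiftV n v).
Proof. by move=> [vV v0]; split=> [|i]; [exact: inV_shiftV | rewrite shiftV_comp]. Qed.

Lemma nongeneric_perp_nonzero (a : int -> C) :
  ~ generic a -> exists v, perp a v /\ nonzero v.
Proof.
move/existsNP=> [s /existsNP[c /not_implyP[s_uniq /not_implyP[dep]]]].
move=> /existsNP[k /not_implyP[ks /eqP ck]].
exists (lincomb (basisV R) s c); split; last by exists k; rewrite (lincomb_basisV (f := id)).
split=> [|i]; first exact: (subspace_lincomb (inV_subspace _) (inV_basisV _)).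
rewrite pairing_shiftV pairing_lincomb; last exact: inV_basisV.
transitivity (lincomb (fun n => shiftA n a) s c i); last by rewrite dep.
by apply: eq_bigr => n _; rewrite pairing_basisV /shiftA addrC.
Qed.

Definition perp_width_lb (a : int -> C) (m : nat) :=
  forall w k, perp a w -> nonzero w -> omega_eq w k -> (m <= k)%N.

Lemma perp_vanishes_outside_eq0 (a r : int -> C) m : perp_width_lb a m ->
  perp a r -> vanishes_outside 0 m r -> forall j, r j = 0.
Proof.
move=> lb ra r0 j; apply/eqP; apply: contraT => rj.
have r_nz : nonzero r by exists j.
have [k rk] := omega_exists ra.1 r_nz.
have := omega_eq_vanishes_outside r0 rk; have := lb _ _ ra r_nz rk; lia.
Qed.

Lemma perp_lincomb_basisV_ord_eq0 (a : int -> C) (m : nat) s d :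
  perp_width_lb a m -> uniq s -> perp a (lincomb (@basisV_ord R m) s d) ->
  forall k, k \in s -> d k = 0.
Proof.
move=> lb s_uniq da k ks; rewrite -(lincomb_basisV_ord_at d s_uniq ks).
exact: perp_vanishes_outside_eq0 lb da (lincomb_basisV_ord_vanishes_outside _ _) _.
Qed.

End Annihilator.

Section Translates.
Variable R : realType.
Local Notation C := R[i].
Variables (p : int -> C) (l : int) (m : nat).
Hypotheses (p_bot : p l != 0) (p_top : p (l + m%:Z) != 0).
Hypothesis p_out : forall i, (i < l) || (l + m%:Z < i) -> p i = 0.

Lemma shiftV_lin_indep : lin_indep (fun n : int => shiftV n p).
Proof.
move=> s c s_uniq dep k ks; apply/eqP; apply: contraT => ck.
have kS : k \in [seq n <- s | c n != 0] by rewrite mem_filter ck ks.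
(* At index l + m + x, with x the largest n such that c n != 0, only the
   x-th translate has a non-zero coefficient. *)
have [lo [x [_ + top]]] := seq_extrema kS; rewrite mem_filter => /andP[cx xs].
have := congr1 (fun v => v (l + m%:Z + x)) dep.
rewrite /lincomb (bigD1_seq x) //= big1_seq => [|y /andP[yx ys]].
  by rewrite /shiftV addrK addr0 => /eqP; rewrite mulf_eq0 (negbTE cx) (negbTE p_top).
have [->|cy] := eqVneq (c y) 0; first by rewrite mul0r.
have /andP[_ y_x] : lo <= y <= x by apply: top; rewrite mem_filter cy ys.
by rewrite /shiftV p_out ?mulr0 //; move: yx y_x; lia.
Qed.

Definition comb (c : int -> C) : int -> C :=
  fun j => \sum_(n \in [set: int]) c n * shiftV n p j.

Lemma comb_window (c : int -> C) N :
  bounded N c -> comb c = lincomb (fun n => shiftV n p) (window N) c.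
Proof. by move=> c0; apply: funext => j; apply: fsum_window => n ?; rewrite c0 ?mul0r. Qed.

Lemma comb0 j : comb (fun _ => 0) j = 0.
Proof. by rewrite /comb fsbig1 // => n _; rewrite mul0r. Qed.

Lemma combD (c d : int -> C) j : inV c -> inV d ->
  comb (fun n => c n + d n) j = comb c j + comb d j.
Proof.
move=> cV dV; rewrite /comb -(fsumD (inV_mulr _ cV) (inV_mulr _ dV)).
by apply: eq_fsbigr => n _; rewrite mulrDl.
Qed.

Lemma comb_basisV k t j : comb (fun n => k * basisV R t n) j = k * shiftV t p j.
Proof.
by rewrite /comb; under eq_fsbigr do rewrite -mulrA; rewrite -mulr_fsumr fsum_basisV.
Qed.

Lemma division_step K w : vanishes_outside (- K.+1%:Z) (m%:Z + K.+1%:Z) w ->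
  exists2 d, inV d & vanishes_outside (- K%:Z) (m%:Z + K%:Z) (fun j => w j - comb d j).
Proof.
(* The translate of p by K - l ends at m + K, the one by -K.+1 - l starts at
   -K.+1; both stay inside [-K.+1, m + K]. *)
move=> w0; pose k1 := w (m%:Z + K%:Z) / p (l + m%:Z); pose k2 := w (- K.+1%:Z) / p l.
exists (fun n => k1 * basisV R (K%:Z - l) n + k2 * basisV R (- K.+1%:Z - l) n).
  by apply: inVD; apply: inV_mull; apply: inV_basisV.
move=> j out_j; rewrite combD ?comb_basisV; try by apply: inV_mull; apply: inV_basisV.
rewrite /shiftV; have [->|j_top] := eqVneq j (m%:Z + K%:Z).
  rewrite [p (_ - (- _ - _))]p_out; last lia.
  have -> : m%:Z + K%:Z - (K%:Z - l) = l + m%:Z by lia.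
  by rewrite mulr0 addr0 /k1 divfK // subrr.
have [->|j_bot] := eqVneq j (- K.+1%:Z).
  rewrite [p (_ - (K%:Z - _))]p_out; last lia.
  have -> : - K.+1%:Z - (- K.+1%:Z - l) = l by lia.
  by rewrite mulr0 add0r /k2 divfK // subrr.
rewrite w0; last by move: out_j j_top j_bot; lia.
by rewrite !p_out ?mulr0 ?addr0 ?subrr //; move: out_j j_top j_bot; lia.
Qed.

Lemma division K w : vanishes_outside (- K%:Z) (m%:Z + K%:Z) w ->
  exists2 c, inV c & vanishes_outside 0 m (fun j => w j - comb c j).
Proof.
elim: K w => [|K IH] w w0.
  by exists (fun _ => 0) => [|j ?]; [exact: inV0 | rewrite comb0 subr0 w0 //; lia].
have [d dV /IH[c cV wdc0]] := division_step w0.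
exists (fun n => c n + d n) => [|j /wdc0]; first exact: inVD.
by rewrite combD // opprD addrA addrAC.
Qed.

Lemma division_inV w :
  inV w -> exists2 c, inV c & vanishes_outside 0 m (fun j => w j - comb c j).
Proof. by move=> [N w0]; apply: (@division N.+1) => j ?; apply: w0; lia. Qed.

End Translates.

Section MinimalWidth.
Variable R : realType.
Local Notation C := R[i].
Variables (a p : int -> C) (l : int) (m : nat).
Hypotheses (p_perp : perp a p) (p_bot : p l != 0) (p_top : p (l + m%:Z) != 0).
Hypothesis p_out : forall i, (i < l) || (l + m%:Z < i) -> p i = 0.
Hypothesis m_lb : perp_width_lb a m.

Lemma perp_comb c : inV c -> perp a (comb p c).
Proof.
move=> [N c0]; rewrite (comb_window _ c0).
exact: (subspace_lincomb (perp_subspace a) (fun n => perp_shiftV n p_perp)).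
Qed.

Lemma perp_decomposition w : inV w ->
  exists2 w', perp a w' & vanishes_outside 0 m (fun j => w j - w' j).
Proof. by move=> /(division_inV p_bot p_top p_out)[c /perp_comb]; exists (comb p c). Qed.

Lemma perp_basis : is_basis (fun n : int => shiftV n p) (perp a).
Proof.
split=> [n | | w wa]; [exact: perp_shiftV | exact: shiftV_lin_indep p_top p_out |].
have [c cV r0] := division_inV p_bot p_top p_out wa.1; have [N c0] := cV.
have ra := subspace_sub (perp_subspace a) wa (perp_comb cV).
have r_eq0 := perp_vanishes_outside_eq0 m_lb ra r0.
exists (window N), c; rewrite -comb_window //; apply: funext => j.
by apply/eqP; rewrite -subr_eq0 r_eq0.
Qed.

Lemma codim_perp : codim (perp a) m.
Proof.
exists (@basisV_ord R m); split=> [k | d da k | v vV]; first exact: inV_basisV.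
  exact: perp_lincomb_basisV_ord_eq0 m_lb (enum_uniq _) da _ (mem_enum _ k).
have [w' w'a /vanishes_outside_lincomb_basisV_ord r_eq] := perp_decomposition vV.
exists (fun k => v k%:Z - w' k%:Z), w'; split=> //; rewrite -r_eq.
by apply: funext => j; rewrite addrC subrK.
Qed.

Lemma perp_basis_completion :
  is_basis (sum_family (fun n => shiftV n p) (@basisV_ord R m)) (@inV R).
Proof.
apply: sum_family_basis (perp_subspace a) perp_basis (fun k => inV_basisV _ _) _ _.
  by move=> s d s_uniq; apply: perp_lincomb_basisV_ord_eq0.
move=> w /perp_decomposition[w' w'a /vanishes_outside_lincomb_basisV_ord r_eq].
by exists w' => //; exists (enum 'I_m), (fun k : 'I_m => w k%:Z - w' k%:Z).
Qed.

End MinimalWidth.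

Theorem lemma2p3 (R : realType) (a : int -> R[i]) :
  ~ generic a ->
  is_subspace (perp a) /\
  exists m : nat,
    [/\ exists v, [/\ perp a v, nonzero v & omega_eq v m],
        forall (w : int -> R[i]) (k : nat),
          perp a w -> nonzero w -> omega_eq w k -> (m <= k)%N,
        codim (perp a) m
      & forall v : int -> R[i], perp a v -> nonzero v -> omega_eq v m ->
          is_basis (fun n : int => shiftV n v) (perp a) /\
          is_basis (fun x : int + 'I_m =>
                      match x with
                      | inl n => shiftV n v
                      | inr k => basisV R (nat_of_ord k)%:Z
                      end) (@inV R)].
Proof.
move=> nongen; split; first exact: perp_subspace.
have [v0 [v0a v0_nz]] := nongeneric_perp_nonzero nongen.
have [k0 v0_k0] := omega_exists v0a.1 v0_nz.
pose has_width k := `[< exists v, [/\ perp a v, nonzero v & omega_eq v k] >].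
have [|m /asboolP[p [pa p_nz p_m]] m_min] := @ex_minnP has_width.
  by exists k0; apply/asboolP; exists v0.
have m_lb : perp_width_lb a m.
  by move=> w k wa w_nz w_k; apply: m_min; apply/asboolP; exists w.
exists m; split=> //; first by exists p.
  by have [l [p_bot p_top p_out]] := p_m; exact: codim_perp pa p_bot p_top p_out m_lb.
move=> v va v_nz [l [v_bot v_top v_out]].
split; [exact: (perp_basis va v_bot v_top v_out m_lb) |
        exact: (perp_basis_completion va v_bot v_top v_out m_lb)].
Qed.
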